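(* Let $(\sigma_N)_{N \geq 1}$ be a sequence such that $\sigma_N$ is a permutation of $\{1,\dots,N\}$ for every $N \geq 1$, and such that for every $N \geq 1$, $\sigma_N$ is obtained by removing the element $N+1$ from the cycle structure of $\sigma_{N+1}$. For every finite subset $I \subset \mathbb{N}^* = \{1,2,\dots\}$ and every integer $N \geq \max I$, let $\sigma^{(N)}_I$ be the permutation of $I$ obtained by removing the elements of $\{1,\dots,N\} \setminus I$ from the cycle structure of $\sigma_N$. Then $\sigma^{(N)}_I$ does not depend on the choice of $N \geq \max I$; writing $\sigma_I := \sigma^{(N)}_I$, for all finite subsets $I \subset J$ of $\mathbb{N}^*$, the permutation $\sigma_I$ is obtained from the cycle structure of $\sigma_J$ by removing the elements of $J \setminus I$.
   Context: For finite sets $I \subset J$ and a permutation $\tau$ of $J$, ''removing the elements of $J \setminus I$ from the cycle structure of $\tau$'' means forming the permutation $\pi$ of $I$ given by $\pi(x) = \tau^m(x)$, where $m \geq 1$ is the smallest integer such that $\tau^m(x) \in I$. *)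

From mathcomp Require Import all_boot.
From mathcomp Require Import finmap.
Set Implicit Arguments. Unset Strict Implicit. Unset Printing Implicit Defensive.
Local Open Scope fset_scope.

Definition intv (N : nat) : {fset nat} := [fset i | i in iota 1 N].

(* A permutation of the finite set J is represented by a function nat -> nat
   that maps J bijectively onto J and is the identity outside J. *)
Definition is_perm_on (J : {fset nat}) (f : nat -> nat) : Prop :=
  [/\ {in J, forall x, f x \in J}, {in J &, injective f}
    & forall x, x \notin J -> f x = x].

(* pi is obtained from the cycle structure of tau (a permutation of J)
   by removing the elements of J \ I:  for x in I, pi x = tau^m x where
   m >= 1 is the smallest integer with tau^m x in I; pi is the identity
   outside I (our convention for permutations of I). *)
Definition removed_from (J : {fset nat}) (tau : nat -> nat)
    (I : {fset nat}) (pi : nat -> nat) : Prop :=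
  (forall x, x \in I -> exists m, [/\ 0 < m, iter m tau x \in I,
      pi x = iter m tau x
    & forall k, 0 < k < m -> iter k tau x \notin I])
  /\ (forall x, x \notin I -> pi x = x).

(** Removing points from the cycle structure is transitive: removing [J \ I]
    from the permutation obtained from [tau] by removing [K \ J] is the same as
    removing [K \ I] from [tau] directly, because following a cycle of [tau]
    and stopping first at the points of [J], then at those of [I], stops at
    exactly the points of [I]. Along the chain [sigma_N, sigma_(N+1), ...] this
    shows that removing the points outside [I] from [sigma_N] gives the same
    permutation for every [N >= max I]; one more application to [sigma_J],
    with uniqueness of the removal, gives the restriction property. *)
From mathcomp Require Import all_boot.
From mathcomp Require Import finmap.
From mathcomp Require Import zify.
From Stdlib Require Import ClassicalEpsilon.
Set Implicit Arguments. Unset Strict Implicit. Unset Printing Implicit Defensive.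

Lemma iter_closed (K : {fset nat}) tau x n :
  {in K, forall y, tau y \in K} -> x \in K -> iter n tau x \in K.
Proof. by move=> tauK xK; elim: n => [|n IHn] //=; apply: tauK. Qed.

Section PermutationOrbits.

Variables (K : {fset nat}) (tau : nat -> nat).
Hypothesis tau_perm : is_perm_on K tau.

Lemma iter_perm_inj n a b :
  a \in K -> b \in K -> iter n tau a = iter n tau b -> a = b.
Proof.
case: tau_perm => tauK tau_inj _ aK bK; elim: n => [|n IHn] //= eq_ab.
by apply: IHn; apply: tau_inj => //; exact: iter_closed.
Qed.

(* Transport [tau] to a permutation of the finite type [K] and use [fingraph]. *)
Lemma perm_orbit_returns x : x \in K -> exists2 m, 0 < m & iter m tau x = x.
Proof.
case: tau_perm => tauK tau_inj _ xK.
pose f (y : K) : K := insubd y (tau (val y)).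
have fE y : val (f y) = tau (val y) by rewrite insubdK //; apply/tauK/fsvalP.
have f_inj : injective f.
  move=> a b /(congr1 val); rewrite !fE => /tau_inj eq_ab.
  by apply/val_inj/eq_ab/fsvalP/fsvalP.
have iter_fE n y : val (iter n f y) = iter n tau (val y).
  by elim: n => [|n IHn] //=; rewrite fE IHn.
exists (order f (FSetSub xK)); first exact: order_gt0.
by rewrite -[x]/(val (FSetSub xK)) -iter_fE iter_order.
Qed.

Lemma first_return (I : {fset nat}) x : {subset I <= K} -> x \in I ->
  exists m, [/\ 0 < m, iter m tau x \in I
    & forall k, 0 < k < m -> iter k tau x \notin I].
Proof.
move=> IK xI; have [m m_gt0 iter_m] := perm_orbit_returns (IK _ xI).
have ex_m : exists n, (0 < n) && (iter n tau x \in I).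
  by exists m; rewrite m_gt0 iter_m xI.
case: (ex_minnP ex_m) => n /andP[n_gt0 nI] n_min.
exists n; split => // k /andP[k_gt0 lt_kn]; apply/negP => kI.
by have := n_min k; rewrite k_gt0 kI leqNgt lt_kn => /(_ isT).
Qed.

Lemma removed_from_exists (I : {fset nat}) : {subset I <= K} ->
  exists pi, removed_from K tau I pi.
Proof.
move=> IK.
have pi_x x : exists y, (x \in I -> exists m, [/\ 0 < m, iter m tau x \in I,
      y = iter m tau x & forall k, 0 < k < m -> iter k tau x \notin I])
    /\ (x \notin I -> y = x).
  case: (boolP (x \in I)) => [xI|]; last by exists x.
  have [m [m_gt0 mI m_min]] := first_return IK xI.
  by exists (iter m tau x); split => // _; exists m.
exists (fun x => proj1_sig (constructive_indefinite_description _ (pi_x x))).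
by split=> x; case: (proj2_sig (constructive_indefinite_description _ (pi_x x))).
Qed.

Lemma removed_from_self : removed_from K tau K tau.
Proof.
case: tau_perm => tauK _ tau_id; split=> // x xK.
by exists 1; split => //; [exact: tauK | case=> [|[]]].
Qed.

Lemma removed_from_perm (I : {fset nat}) pi :
  {subset I <= K} -> removed_from K tau I pi -> is_perm_on I pi.
Proof.
move=> IK [pi_ret pi_id]; split => //.
  by move=> x /pi_ret[m [_ mI -> _]].
move=> x y xI yI; have [mx [mx_gt0 _ -> mx_min]] := pi_ret x xI.
have [my [my_gt0 _ -> my_min]] := pi_ret y yI.
wlog le_m : x y mx my xI yI mx_gt0 my_gt0 mx_min my_min / mx <= my.
  move=> wlog_le eq_xy; case: (leqP mx my) => [le_m | /ltnW le_m].
    exact: wlog_le eq_xy.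
  by apply/esym/(wlog_le y x my mx).
move=> eq_xy; have [eq_m | lt_m] := eqVneq mx my.
  by move: eq_xy; rewrite eq_m; apply: iter_perm_inj; apply: IK.
have {}lt_m : mx < my by rewrite ltn_neqAle lt_m.
(* Both walks reach the same point, so [y] reaches [x] after [my - mx] steps. *)
have ret_x : iter (my - mx) tau y = x.
  have tauK : {in K, forall z, tau z \in K} by case: tau_perm.
  apply: (iter_perm_inj (n := mx)); [exact/iter_closed/IK | exact: IK |].
  by rewrite -iterD (subnKC (ltnW lt_m)) eq_xy.
suff /my_min : 0 < my - mx < my by rewrite ret_x xI.
by apply/andP; lia.
Qed.

End PermutationOrbits.

Lemma removed_from_uniq (K I : {fset nat}) tau pi1 pi2 :
  removed_from K tau I pi1 -> removed_from K tau I pi2 -> pi1 =1 pi2.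
Proof.
move=> [ret1 id1] [ret2 id2] x; case: (boolP (x \in I)) => [xI|xNI]; last first.
  by rewrite id1 // id2.
have [m1 [m1_gt0 m1I -> min1]] := ret1 x xI.
have [m2 [m2_gt0 m2I -> min2]] := ret2 x xI.
case: (ltngtP m1 m2) => [lt_m|lt_m|-> //].
- by have := min2 m1; rewrite m1_gt0 lt_m m1I => /(_ isT).
- by have := min1 m2; rewrite m2_gt0 lt_m m2I => /(_ isT).
Qed.

Lemma removed_from_eq (K I : {fset nat}) tau pi1 pi2 :
  removed_from K tau I pi1 -> pi1 =1 pi2 -> removed_from K tau I pi2.
Proof.
move=> [ret1 id1] eq_pi; split => x xI; last by rewrite -eq_pi id1.
by have [m [? ? ? ?]] := ret1 x xI; exists m; split; rewrite // -eq_pi.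
Qed.

Section RemovalTransitivity.

Variables (K J : {fset nat}) (tau pi : nat -> nat).
Hypothesis pi_removed : removed_from K tau J pi.

(* The [j]-th step of [pi] from [x] is the [t]-th step of [tau], and every
   earlier visit of [tau] to [J] is an earlier step of [pi]. *)
Lemma removed_from_iter x j : x \in J -> exists t,
  [/\ iter j pi x = iter t tau x, (0 < t) = (0 < j)
    & forall k, k < t -> iter k tau x \in J ->
      exists2 j', j' < j & (0 < k -> 0 < j') /\ iter k tau x = iter j' pi x].
Proof.
case: pi_removed => pi_ret _ xJ.
have piJ : {in J, forall y, pi y \in J} by move=> y /pi_ret[m [_ ? -> _]].
elim: j => [|j [t [eq_t t_gt0 visits]]]; first by exists 0; split.
have [m [m_gt0 _ eq_m m_min]] := pi_ret _ (iter_closed j piJ xJ).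
exists (m + t); split; first by rewrite iterS eq_m eq_t -iterD.
  by rewrite addn_gt0 m_gt0.
move=> k lt_k kJ; case: (ltngtP k t) => [lt_kt|lt_tk|->].
- by have [j' ? ?] := visits k lt_kt kJ; exists j' => //; exact: ltnW.
- suff /m_min : 0 < k - t < m by rewrite eq_t -iterD (subnK (ltnW lt_tk)) kJ.
  by apply/andP; lia.
- by exists j => //; rewrite t_gt0.
Qed.

Lemma removed_from_trans (I : {fset nat}) rho :
  {subset I <= J} -> removed_from J pi I rho -> removed_from K tau I rho.
Proof.
move=> IJ [rho_ret rho_id]; split => // x xI.
have [m [m_gt0 mI -> m_min]] := rho_ret x xI.
have [t [eq_t t_gt0 visits]] := removed_from_iter m (IJ _ xI).
exists t; rewrite -eq_t; split => //; first by rewrite t_gt0.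
move=> k /andP[k_gt0 lt_kt]; apply/negP => kI.
have [j' lt_j'm [/(_ k_gt0) j'_gt0 eq_k]] := visits k lt_kt (IJ _ kI).
by have := m_min j'; rewrite j'_gt0 lt_j'm -eq_k kI => /(_ isT).
Qed.

End RemovalTransitivity.

Lemma in_intv x N : (x \in intv N) = (1 <= x <= N).
Proof. by rewrite in_fset /= mem_iota add1n ltnS. Qed.

Lemma intv_subset M N : M <= N -> {subset intv M <= intv N}.
Proof. by move=> le_MN x; rewrite !in_intv => /andP[-> /leq_trans->]. Qed.

Lemma sub_intv (I : {fset nat}) N : 0 \notin I ->
  (forall x, x \in I -> x <= N) -> {subset I <= intv N}.
Proof.
move=> I0 le_IN x xI; rewrite in_intv le_IN // andbT lt0n.
by apply: contraNneq I0 => <-.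
Qed.

(* The smallest admissible [N] for [I]; the [maxn 1] handles [I = fset0]. *)
Definition bound (I : {fset nat}) : nat := maxn 1 (\max_(i <- I) i).

Lemma bound_gt0 I : 0 < bound I.
Proof. by rewrite leq_max leqnn. Qed.

Lemma leq_bound (I : {fset nat}) x : x \in I -> x <= bound I.
Proof.
by move=> xI; rewrite leq_max (@leq_bigmax_seq _ _ xpredT id x xI isT) orbT.
Qed.

Lemma bound_leq (I : {fset nat}) N : 1 <= N ->
  (forall x, x \in I -> x <= N) -> bound I <= N.
Proof.
move=> N_gt0 le_IN; rewrite geq_max N_gt0.
by apply/bigmax_leqP_seq => i iI _; apply: le_IN.
Qed.

Section CompatibleSequence.

Variable sigma : nat -> nat -> nat.
Hypothesis sigma_perm : forall N, 1 <= N -> is_perm_on (intv N) (sigma N).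
Hypothesis sigma_removed : forall N, 1 <= N ->
  removed_from (intv N.+1) (sigma N.+1) (intv N) (sigma N).

Lemma sigma_removed_le M N : 1 <= M -> M <= N ->
  removed_from (intv N) (sigma N) (intv M) (sigma M).
Proof.
move=> M_gt0; elim: N => [|N IHN]; first by case: M M_gt0.
rewrite leq_eqVlt ltnS => /orP[/eqP <- | le_MN].
  exact/removed_from_self/sigma_perm.
exact: (removed_from_trans (sigma_removed (leq_trans M_gt0 le_MN))
  (intv_subset le_MN) (IHN le_MN)).
Qed.

End CompatibleSequence.

Local Open Scope fset_scope.

Theorem proposition2p1 (sigma : nat -> nat -> nat)
  (Hperm : forall N, 1 <= N -> is_perm_on (intv N) (sigma N))
  (Hrem : forall N, 1 <= N ->
     removed_from (intv N.+1) (sigma N.+1) (intv N) (sigma N)) :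
  exists sI : {fset nat} -> nat -> nat,
    (forall (I : {fset nat}) (N : nat), 0 \notin I -> 1 <= N ->
       (forall x, x \in I -> x <= N) ->
       is_perm_on I (sI I) /\ removed_from (intv N) (sigma N) I (sI I))
    /\
    (forall I J : {fset nat}, 0 \notin J -> I `<=` J ->
       removed_from J (sI J) I (sI I)).
Proof.
have sI_ex I : exists pi, 0 \notin I ->
    removed_from (intv (bound I)) (sigma (bound I)) I pi.
  case: (boolP (0 \in I)) => [_|I0]; first by exists id.
  have IB := sub_intv I0 (@leq_bound I).
  by have [pi ?] := removed_from_exists (Hperm _ (bound_gt0 I)) IB; exists pi.
have [sI sI_bound] : exists sI : {fset nat} -> nat -> nat, forall I, 0 \notin I ->
    removed_from (intv (bound I)) (sigma (bound I)) I (sI I).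
  exists (fun I => proj1_sig (constructive_indefinite_description _ (sI_ex I))) => I.
  exact: proj2_sig (constructive_indefinite_description _ (sI_ex I)).
have sI_N I N : 0 \notin I -> 1 <= N -> (forall x, x \in I -> x <= N) ->
    is_perm_on I (sI I) /\ removed_from (intv N) (sigma N) I (sI I).
  move=> I0 N_gt0 le_IN; have IB := sub_intv I0 (@leq_bound I).
  split; first exact: (removed_from_perm (Hperm _ (bound_gt0 I)) IB (sI_bound I I0)).
  have le_BN := bound_leq N_gt0 le_IN.
  exact: (removed_from_trans (sigma_removed_le Hperm Hrem (bound_gt0 I) le_BN)
    IB (sI_bound I I0)).
exists sI; split => // I J J0 /fsubsetP IJ.
have I0 : 0 \notin I by apply: contra J0 => /IJ.
have le_J := @leq_bound J; have le_I x (xI : x \in I) := le_J x (IJ x xI).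
have [J_perm J_rem] := sI_N J _ J0 (bound_gt0 J) le_J.
have [_ I_rem] := sI_N I _ I0 (bound_gt0 J) le_I.
have [rho rho_rem] := removed_from_exists J_perm IJ.
apply: (removed_from_eq rho_rem).
exact: (removed_from_uniq (removed_from_trans J_rem IJ rho_rem) I_rem).
Qed.
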